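(* Let $m,n,p,q\in\mathbb{R}$ with $m<0$, let $P(t)=t^5+mt^3+nt^2+pt+q$, and set $u=\frac{2\sqrt{-m}}{\sqrt5}$. Then $P$ has at most three roots on each of the half-lines $(u,\infty)$ and $(-\infty,-u)$. *)

From mathcomp Require Import all_boot all_order all_algebra.
Set Implicit Arguments. Unset Strict Implicit. Unset Printing Implicit Defensive.
Import Order.TTheory GRing.Theory Num.Theory.
Local Open Scope ring_scope.

Definition quinticP (R : ringType) (m n p q : R) : {poly R} :=
  'X^5 + m%:P * 'X^3 + n%:P * 'X^2 + p%:P * 'X + q%:P.

From mathcomp Require Import all_boot all_order all_algebra.
From mathcomp Require Import polyrcf.
From mathcomp Require Import ring lra.
Import Order.TTheory GRing.Theory Num.Theory.
Local Open Scope ring_scope.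

(* By Rolle's theorem, between two consecutive roots of P in an interval there
   is a root of P', so a polynomial with four distinct roots in an interval has
   a third derivative vanishing there.  But P''' = 60 t^2 + 6 m, whose roots
   +-sqrt(-m/10) lie in [-u, u]. *)

Section RolleCounting.
Variables (R : rcfType) (I : pred R).
Hypothesis I_convex : forall {a b c}, I a -> I b -> c \in `]a, b[ -> I c.

Lemma path_roots_deriv (p : {poly R}) {x s} :
  path <%O x s -> I x -> all I s -> root p x -> all (root p) s ->
  exists2 s', path <%O x s' &
    [/\ size s' = size s, all I s' & all (root p^`()) s'].
Proof.
elim: s x => [|y s IHs] x; first by exists [::].
move=> /= /andP[lt_xy path_y] Ix /andP[Iy Is] px /andP[py ps].
have [s' path_y' [size_s' Is' ps']] := IHs y path_y Iy Is py ps.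
have [c c_xy p'c] := poly_rolle lt_xy (etrans (eqP px) (esym (eqP py))).
have [lt_xc lt_cy] : x < c /\ c < y by move: c_xy; rewrite in_itv => /andP[].
have Ic : I c := I_convex Ix Iy c_xy.
exists (c :: s'); last by split; rewrite /= ?size_s' ?Ic // /root p'c eqxx.
rewrite /= lt_xc path_min_sorted ?(path_sorted path_y') //.
by apply/allP => z /(allP (lt_path_min path_y')); apply: lt_trans.
Qed.

Lemma uniq_roots_deriv (p : {poly R}) s :
  uniq s -> all I s -> all (root p) s ->
  exists2 s', uniq s' &
    [/\ size s' = (size s).-1, all I s' & all (root p^`()) s'].
Proof.
rewrite -sort_lt_sorted -(size_sort <=%O) -(all_sort I <=%O) -(all_sort (root p) <=%O).
case: (sort _ s) => [|x t]; first by exists [::].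
move=> /= path_t /andP[Ix It] /andP[px pt].
have [s' path_s' [size_s' Is' ps']] := path_roots_deriv p path_t Ix It px pt.
by exists s'; first exact/lt_sorted_uniq/(path_sorted path_s').
Qed.

Lemma size_roots_le_deriv (p : {poly R}) k :
  {in I, forall z, ~~ root p^`(k) z} ->
  forall s, uniq s -> all I s -> all (root p) s -> (size s <= k)%N.
Proof.
elim: k p => [|k IHk] p no_root [|x s] //= s_uniq Is ps.
  by case/andP: Is => /no_root; case/andP: ps => ->.
have [s' s'_uniq [size_s' Is' ps']] := uniq_roots_deriv p (x :: s) s_uniq Is ps.
rewrite ltnS -[size s]/(size (x :: s)).-1 -size_s' (IHk p^`()) // => z /no_root.
by rewrite derivSn.
Qed.

End RolleCounting.

Lemma horner_quinticP_deriv3 (R : comRingType) (m n p q z : R) :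
  (quinticP m n p q)^`(3).[z] = 60 * z ^+ 2 + 6 * m.
Proof. by rewrite /quinticP !derivSn derivn0 !derivE !hornerE /=; ring. Qed.

Theorem corollary2 (R : rcfType) (m n p q : R) (hm : m < 0) :
  let P := quinticP m n p q in
  let u := 2 * Num.sqrt (- m) / Num.sqrt 5 in
  (forall s : seq R, uniq s -> (forall x, x \in s -> u < x /\ root P x) ->
     (size s <= 3)%N) /\
  (forall s : seq R, uniq s -> (forall x, x \in s -> x < - u /\ root P x) ->
     (size s <= 3)%N).
Proof.
move=> P u.
have u_ge0 : 0 <= u by rewrite mulr_ge0 ?invr_ge0 ?mulr_ge0 ?sqrtr_ge0.
have u_sqr : u ^+ 2 = 4 / 5 * - m.
  by rewrite expr_div_n exprMn !sqr_sqrtr ?oppr_ge0 ?ltW //; field.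
have P3_neq0 z : u ^+ 2 < z ^+ 2 -> ~~ root P^`(3) z.
  by move=> lt_uz; rewrite /root horner_quinticP_deriv3 lt0r_neq0 //; nra.
have roots_le3 (I : pred R) :
    (forall a b c, I a -> I b -> c \in `]a, b[ -> I c) ->
    (forall z, I z -> u ^+ 2 < z ^+ 2) ->
    forall s, uniq s -> (forall x, x \in s -> I x /\ root P x) -> (size s <= 3)%N.
  move=> I_convex I_outside s s_uniq s_roots.
  apply: (size_roots_le_deriv _ _ I_convex P 3 _ s s_uniq) => [z /I_outside/P3_neq0 //||].
    by apply/allP => x /s_roots[].
  by apply/allP => x /s_roots[].
split; [apply: (roots_le3 (> u)) | apply: (roots_le3 (< - u))] => /=.
- by move=> a b c lt_ua _; rewrite in_itv => /andP[/(lt_trans lt_ua)].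
- by move=> z lt_uz; nra.
- by move=> a b c _ lt_bu; rewrite in_itv => /andP[_ /lt_trans]; apply.
- by move=> z lt_zu; nra.
Qed.
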